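(* Let $R$ be a principal ideal domain with field of fractions $F$, and let $Q\subseteq P$ be additive subgroups of $F$ containing $R$. If $P$ is an $R$-module and $\{p^mq\mid p\in P,\ q\in Q\}\subseteq Q$ for some positive integer $m$, then $P=Q$. Consequently, for every admissible pair $(\Lambda_l,\Lambda_s)=(Q,P)$ (of any type $\Phi\in\{B_l,C_l,F_4,G_2\}$) in $F$ with $R\subseteq Q$, one has $P=Q$ and $P$ is a subring of $F$.
   Context: Let $p=2$ for $\Phi=B_l,C_l,F_4$ and $p=3$ for $\Phi=G_2$. An admissible pair of type $\Phi$ in a ring $R$ is a pair $\Lambda=(\Lambda_l,\Lambda_s)$ of additive subgroups of $R$ with: (AP1) $p\Lambda_s\subseteq\Lambda_l\subseteq\Lambda_s$; (AP2) $t^p\Lambda_l\subseteq\Lambda_l$ for all $t\in\Lambda_s$; (AP3) $\Lambda_s$ is a subring if $\Phi\ne B_l$; (AP4) $\Lambda_l$ is a subring if $\Phi\ne C_l$; and moreover $\Lambda_l\Lambda_s\subseteq\Lambda_s$ (for $B_2=C_2$ neither need be a subring). *)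

From HB Require Import structures.
From mathcomp Require Import all_boot all_order all_algebra.
Set Implicit Arguments. Unset Strict Implicit. Unset Printing Implicit Defensive.
Import GRing.Theory.
Local Open Scope ring_scope.

Definition emb (R : idomainType) (x : R) : {fraction R} := @FracField.tofrac R x.

Definition is_ideal (R : comNzRingType) (I : R -> Prop) : Prop :=
  [/\ I 0, (forall x y, I x -> I y -> I (x - y)) & (forall r x, I x -> I (r * x))].

Definition is_PID (R : idomainType) : Prop :=
  forall I : R -> Prop, is_ideal I -> exists a : R, forall x, I x <-> exists r, x = r * a.

Definition is_addsubgroup (F : zmodType) (S : F -> Prop) : Prop :=
  S 0 /\ (forall x y, S x -> S y -> S (x - y)).

Definition is_subring (F : nzRingType) (S : F -> Prop) : Prop :=
  [/\ S 1, (forall x y, S x -> S y -> S (x - y)) & (forall x y, S x -> S y -> S (x * y))].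

Inductive root_type := Btype of nat | Ctype of nat | F4 | G2.

Definition valid_type (Phi : root_type) : Prop :=
  match Phi with Btype l => (2 <= l)%N | Ctype l => (2 <= l)%N | _ => True end.

(* Phi is of type B_l (for some l); C_2 = B_2 counts. *)
Definition is_typeB (Phi : root_type) : Prop :=
  match Phi with Btype _ => True | Ctype l => l = 2%N | _ => False end.

(* Phi is of type C_l (for some l); B_2 = C_2 counts. *)
Definition is_typeC (Phi : root_type) : Prop :=
  match Phi with Ctype _ => True | Btype l => l = 2%N | _ => False end.

Definition type_p (Phi : root_type) : nat :=
  match Phi with G2 => 3%N | _ => 2%N end.

Definition admissible_pair (Phi : root_type) (F : nzRingType) (Ll Ls : F -> Prop) : Prop :=
  is_addsubgroup Ll /\ is_addsubgroup Ls /\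
  ((forall x, Ls x -> Ll ((type_p Phi)%:R * x)) /\ (forall x, Ll x -> Ls x)) /\
  (forall t x, Ls t -> Ll x -> Ll (t ^+ type_p Phi * x)) /\
  (~ is_typeB Phi -> is_subring Ls) /\
  (~ is_typeC Phi -> is_subring Ll) /\
  (forall x y, Ll x -> Ls y -> Ls (x * y)).

(* Write x = a/b with a, b coprime, i.e. u a + v b = 1 (this is where R being
   a PID is used).  Then 1/b = u x + v lies in P because P is an R-module
   containing R, and x = (1/b)^m (a b^(m-1)) lies in Q since a b^(m-1) is in
   R.  For an admissible pair (Q, P), AP2 and the closure of P under
   multiplication by Q supply the hypotheses with m = p; once P = Q, that
   closure makes P a subring. *)
From HB Require Import structures.
From mathcomp Require Import all_boot all_order all_algebra.
Set Implicit Arguments. Unset Strict Implicit. Unset Printing Implicit Defensive.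
Local Open Scope ring_scope.
Import GRing.Theory.
Local Open Scope quotient_scope.

Lemma addsubgroupD (V : zmodType) (S : V -> Prop) :
  is_addsubgroup S -> forall x y, S x -> S y -> S (x + y).
Proof.
move=> [S0 SB] x y Sx Sy.
by have := SB x (0 - y) Sx (SB _ _ S0 Sy); rewrite sub0r opprK.
Qed.

Lemma frac_repr (R : idomainType) (x : {fraction R}) :
  exists a b : R, b != 0 /\ x = emb a / emb b.
Proof.
elim/quotW: x => r.
exists (\n_r), (\d_r); split; first exact: denom_ratioP.
have hd : emb (\d_r) != 0 by rewrite tofrac_eq0 denom_ratioP.
apply: (mulIf hd); rewrite divfK // /emb /FracField.tofrac; unlock.
change (FracField.mul (\pi_({fraction R}) r) (\pi_({fraction R}) (Ratio \d_r 1))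
        = \pi_({fraction R}) (Ratio \n_r 1)).
rewrite -FracField.pi_mul; apply/eqmodP.
rewrite /= FracField.equivfE /FracField.mulf /=.
rewrite !numden_Ratio ?oner_neq0 ?mulf_neq0 ?denom_ratioP ?oner_neq0 //.
by rewrite !mulr1 mulrC.
Qed.

Section PID.

Variables (R : idomainType) (hR : is_PID R).

Lemma PID_bezout (a b : R) :
  exists d u v a' b' : R, [/\ u * a + v * b = d, a = a' * d & b = b' * d].
Proof.
pose I y := exists u v, y = u * a + v * b.
have hI : is_ideal I.
  split.
  - by exists 0, 0; rewrite !mul0r addr0.
  - move=> y z [u [v ->]] [u' [v' ->]]; exists (u - u'), (v - v').
    by rewrite !mulrBl addrACA opprD.
  - move=> r y [u [v ->]]; exists (r * u), (r * v).
    by rewrite mulrDr !mulrA.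
have [d hd] := hR hI.
have [u [v duv]] : I d by apply/hd; exists 1; rewrite mul1r.
have [a' ea] : exists r, a = r * d by apply/hd; exists 1, 0; rewrite mul1r mul0r addr0.
have [b' eb] : exists r, b = r * d by apply/hd; exists 0, 1; rewrite mul1r mul0r add0r.
by exists d, u, v, a', b'.
Qed.

Lemma coprime_frac_repr (x : {fraction R}) :
  exists a b u v : R, [/\ b != 0, u * a + v * b = 1 & x = emb a / emb b].
Proof.
have [a [b [b0 ->]]] := frac_repr x.
have [d [u [v [a' [b' [duv ea eb]]]]]] := PID_bezout a b.
have d0 : d != 0 by apply: contraNneq b0 => d0; rewrite eb d0 mulr0.
have b'0 : b' != 0 by apply: contraNneq b0 => b'0; rewrite eb b'0 mul0r.
exists a', b', u, v; split => //.
  by apply: (mulIf d0); rewrite mulrDl -!mulrA -ea -eb duv mul1r.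
rewrite ea eb /emb !tofracM invfM mulrACA mulfV ?mulr1 //.
by rewrite tofrac_eq0.
Qed.

Section PowStable.

Variables (Q P : {fraction R} -> Prop).
Hypothesis hP : is_addsubgroup P.
Hypotheses (QP : forall x, Q x -> P x) (QR : forall r : R, Q (emb r)).
Hypothesis PM : forall (r : R) x, P x -> P (emb r * x).

Lemma inv_denom_mem (a b u v : R) :
  b != 0 -> u * a + v * b = 1 -> P (emb a / emb b) -> P (emb b)^-1.
Proof.
move=> b0 euv Px.
have B0 : emb b != 0 by rewrite tofrac_eq0.
have -> : (emb b)^-1 = emb u * (emb a / emb b) + emb v.
  apply: (mulIf B0); rewrite mulVf // mulrDl -mulrA divfK //.
  by rewrite /emb -!tofracM -tofracD euv tofrac1.
by apply: addsubgroupD => //; [apply: PM | apply/QP/QR].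
Qed.

Lemma pow_stable_subgroup_eq (m : nat) : (0 < m)%N ->
  (forall p q, P p -> Q q -> Q (p ^+ m * q)) -> forall x, P x <-> Q x.
Proof.
case: m => [//|n] _ hm x; split; last exact: QP.
have [a [b [u [v [b0 euv ->]]]]] := coprime_frac_repr x.
move=> /(inv_denom_mem b0 euv) Pb.
have B0 : emb b != 0 by rewrite tofrac_eq0.
suff <- : (emb b)^-1 ^+ n.+1 * emb (a * b ^+ n) = emb a / emb b by exact: hm.
rewrite /emb tofracM tofracXn -/(emb a) -/(emb b) exprVn exprS invfM.
by rewrite [emb a * _]mulrC mulrA mulfVK ?expf_neq0 // mulrC.
Qed.

End PowStable.

Lemma admissible_pair_eq_subring (Phi : root_type) (Q P : {fraction R} -> Prop) :
  admissible_pair Phi Q P -> (forall r : R, Q (emb r)) ->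
  (forall x, P x <-> Q x) /\ is_subring P.
Proof.
move=> [_ [hP [[_ QP] [AP2 [_ [_ QPM]]]]]] QR.
have PQ : forall x, P x <-> Q x.
  apply: (@pow_stable_subgroup_eq Q P hP QP QR _ (type_p Phi)) AP2.
  - by move=> r x Px; apply: QPM.
  - by case: (Phi).
split=> //; split.
- by apply: QP; rewrite -tofrac1; apply: QR.
- by case: hP.
- by move=> y z /PQ Qy Pz; apply: QPM.
Qed.

End PID.

Theorem proposition7p3 (R : idomainType) (hR : is_PID R) :
  (forall (Q P : {fraction R} -> Prop),
      is_addsubgroup Q -> is_addsubgroup P ->
      (forall x, Q x -> P x) ->
      (forall r : R, Q (emb r)) ->
      (forall (r : R) x, P x -> P (emb r * x)) ->
      (exists m : nat, (0 < m)%N /\ (forall p q, P p -> Q q -> Q (p ^+ m * q))) ->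
      forall x, P x <-> Q x)
  /\
  (forall (Phi : root_type) (Q P : {fraction R} -> Prop),
      valid_type Phi ->
      admissible_pair Phi Q P ->
      (forall r : R, Q (emb r)) ->
      (forall x, P x <-> Q x) /\ is_subring P).
Proof.
split.
- move=> Q P _ hP QP QR PM [m [m0 hm]].
  exact: (pow_stable_subgroup_eq hR hP QP QR PM m0 hm).
- move=> Phi Q P _; exact: admissible_pair_eq_subring.
Qed.
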